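(* Let $C_{(\mathcal T,\Psi_{\mathcal T})}$ be a nested Archimedean copula with regularly varying generators $\psi_v$ of index $-\alpha_v$, $\alpha_v>0$, $v\in\mathcal I$, and for $v\in\mathcal V$ let $\Lambda_v$ denote the tail copula of $C_v$, given recursively by $\Lambda_v(\bm x_{\mathrm{le}(v)})=x_v$ for $v\in\mathcal L$ and $\Lambda_v(\bm x_{\mathrm{le}(v)})=\left(\sum_{w\in\mathrm{ch}(v)}\Lambda_w(\bm x_{\mathrm{le}(w)})^{-1/\alpha_v}\right)^{-\alpha_v}$ for $v\in\mathcal I$. For $v\in\mathcal I$ let $\lambda^\ast(\Lambda_v)=\sup\{\Lambda_v(\bm b):\bm b\in(0,\infty)^{d(v)},\ \prod_{i\in\mathrm{le}(v)}b_i=1\}$ denote the MTCM of $C_v$. Empty products equal $1$. Then: (i) Recursively define $\lambda_v^\ast=1$ for $v\in\mathcal L$ and $$\lambda_v^\ast=d(v)^{-\alpha_v}\prod_{w\in\mathrm{ch}(v)}\left\{d(w)^{\alpha_v}\lambda_w^\ast\right\}^{d(w)/d(v)},\quad v\in\mathcal I.$$ Then $\lambda^\ast(\Lambda_v)=\lambda_v^\ast$ for all $v\in\mathcal I$. (ii) For all $v\in\mathcal I$, $$\lambda_v^\ast=d(v)^{-\alpha_v}\prod_{w\in\mathcal I_v\setminus\{v\}}d(w)^{(\alpha_{\mathrm{pa}(w)}-\alpha_w)d(w)/d(v)}.$$ (iii) For all $v\in\mathcal I$, the maximizer $\bm b_v^\ast$ of $\Lambda_v$ over $\{\bm b\in(0,\infty)^{d(v)}:\prod_{i\in\mathrm{le}(v)}b_i=1\}$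 is unique and, for each leaf $j\in\mathrm{le}(v)$, $$(\bm b_v^\ast)_j=\lambda_v^\ast\,d(v)^{\alpha_v}\prod_{w\in\mathrm{an}_v(j)}d(w)^{\alpha_w-\alpha_{\mathrm{pa}(w)}}.$$
   Context: An Archimedean generator is a continuous, decreasing $\psi:[0,\infty)\to[0,1]$ with $\psi(0)=1$, $\lim_{t\to\infty}\psi(t)=0$, strictly decreasing on $[0,\inf\{t:\psi(t)=0\}]$, with inverse $\psi^{-1}$; $\Psi_\infty$ is the set of completely monotone ones. $f:(0,\infty)\to(0,\infty)$ is regularly varying with index $\rho$ if $\lim_{x\to\infty}f(tx)/f(x)=t^\rho$ for all $t>0$. Let $\mathcal T=(\mathcal V,\mathcal E)$ be a rooted tree with root $r$, leaves $\mathcal L=\{1,\dots,d\}$, internal vertices $\mathcal I=\mathcal V\setminus\mathcal L$; $\mathrm{pa}(v)$ is the parent, $\mathrm{ch}(v)$ the children, $\mathrm{le}(v)$ the leaves of the subtree rooted at $v$ ($\mathrm{le}(v)=\{v\}$ for leaves), $d(v)=|\mathrm{le}(v)|$. For $v\in\mathcal V$, $\mathcal I_v$ denotes the set of internal vertices of the subtree $\mathcal T_v$ rooted at $v$, and for $w$ in $\mathcal T_v$, $\mathrm{an}_v(w)$ is the (possibly empty) set of ancestors of $w$ in $\mathcal T_v$, excluding the root $v$ (and excluding $w$ itself). Given $\{\psi_v\}_{v\in\mathcal I}\subseteq\Psi_\infty$, recursively set $C_v(\bm u_{\mathrm{le}(v)})=u_v$ for $v\in\mathcal L$ and $C_v(\bm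 u_{\mathrm{le}(v)})=\psi_v\left(\sum_{w\in\mathrm{ch}(v)}\psi_v^{-1}(C_w(\bm u_{\mathrm{le}(w)}))\right)$ for $v\in\mathcal I$; the nested Archimedean copula is $C_r$. The sufficient nesting condition is assumed: $(\psi_{\mathrm{pa}(v)}^{-1}\circ\psi_v)'$ is completely monotone for every $v\in\mathcal I\setminus\{r\}$. Regularly varying generators means each $\psi_v$ is regularly varying with index $-\alpha_v$, $\alpha_v>0$. The tail copula of a copula $C$ is $\Lambda(\bm x;C)=\lim_{t\downarrow0}C(t\bm x)/t$. *)

From HB Require Import structures.
From mathcomp Require Import all_boot all_order all_algebra.
From mathcomp Require Import all_classical all_reals all_analysis.
Set Implicit Arguments. Unset Strict Implicit. Unset Printing Implicit Defensive.
Import Order.TTheory GRing.Theory Num.Theory.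
Local Open Scope ring_scope.
Local Open Scope classical_set_scope.

Section Tree.
Variables (V : finType) (r : V) (pa : V -> V).

(* A rooted tree on the finite vertex set V, given by its root r and its
   parent map pa (with the convention pa r = r): every vertex reaches the
   root by iterating pa. *)
Definition is_rooted_tree : Prop :=
  pa r = r /\ forall v : V, exists k : nat, iter k pa v = r.

Definition ch (v : V) : {set V} := [set w | (w != r) && (pa w == v)].
Definition leaf (v : V) : bool := #|ch v| == 0%N.
Definition internal (v : V) : bool := ~~ leaf v.
(* desc v w : w lies in the subtree T_v rooted at v (v is w or an ancestor
   of w); paths have length < #|V| *)
Definition desc (v w : V) : bool := [exists k : 'I_#|V|, iter k pa w == v].
Definition leaves (v : V) : {set V} := [set w | leaf w && desc v w].
Definition Iv (v : V) : {set V} := [set w | internal w && desc v w].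
(* an_v(j): ancestors of j in T_v, excluding the root v and j itself *)
Definition anc (v j : V) : {set V} :=
  [set w | [&& desc v w, desc w j, w != v & w != j]].


End Tree.

Definition dd (R : realType) (V : finType) (r : V) (pa : V -> V) (v : V) : R :=
  (#|leaves r pa v|)%:R.

(* The constraint set {b in (0,oo)^V : prod_{i in le(v)} b_i = 1}; vectors are
   indexed by the vertices, only the coordinates in le(v) matter. *)
Definition Sv (R : realType) (V : finType) (r : V) (pa : V -> V) (v : V)
  : set (V -> R) :=
  [set b | (forall i, 0 < b i) /\ \prod_(i in leaves r pa v) b i = 1].
Arguments Sv R {V} r pa v _.

From mathcomp Require Import all_boot all_order all_algebra.
From mathcomp Require Import all_classical all_reals all_analysis.
From mathcomp Require Import ring lra.
Set Implicit Arguments. Unset Strict Implicit. Unset Printing Implicit Defensive.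
Import Order.TTheory GRing.Theory Num.Theory.
Local Open Scope ring_scope.

(* In logarithmic coordinates the recursion for the tail copulas reads
     ln Lam_v(b) = - alpha_v ln (sum_{k in ch(v)} exp (- ln Lam_k(b) / alpha_v)),
   a soft minimum of the values at the children.  Gibbs' inequality with the
   weights d(k)/d(v) bounds it by sum_k d(k)/d(v) (ln Lam_k(b) + alpha_v ln (d(k)/d(v))),
   with equality iff ln Lam_k(b) + alpha_v ln d(k) does not depend on k.  Induction
   on the tree gives ln Lam_v(b) <= ln lam_v + (1/d(v)) sum_{j in le(v)} ln b_j, with
   equality exactly when ln b_j - ln b*_j is constant on le(v); as the ln b*_j sum
   to zero, this yields (i) and (iii) on the constraint set, where the geometric
   mean of b is 1.  For (ii), d(v) (ln lam_v + alpha_v ln d(v)) satisfies an additive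
   recursion over the children, which unfolds to a sum over the internal vertices
   of the subtree. *)

Section RootedTree.
Variables (V : finType) (r : V) (pa : V -> V).
Hypothesis tree : is_rooted_tree r pa.

Lemma descP v w : reflect (exists k, iter k pa w = v) (desc pa v w).
Proof.
apply: (iffP existsP) => [[k /eqP <-] | [k <-]]; first by exists k.
have wk := fconnect_iter pa k w.
by exists (Ordinal (leq_trans (findex_max wk) (max_card _))); rewrite /= iter_findex.
Qed.

Lemma desc_refl v : desc pa v v.
Proof. by apply/descP; exists 0%N. Qed.

Lemma desc_trans u v w : desc pa u v -> desc pa v w -> desc pa u w.
Proof.
by move=> /descP[m <-] /descP[n <-]; apply/descP; exists (m + n)%N; rewrite iterD.
Qed.

Lemma desc_pa v : desc pa (pa v) v.
Proof. by apply/descP; exists 1%N. Qed.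

Lemma desc_pa_neq v u : desc pa v u -> u != v -> desc pa v (pa u).
Proof.
by move=> /descP[[|n] <-]; rewrite ?eqxx // => _; apply/descP; exists n; rewrite iterSr.
Qed.

Lemma desc_total a b u : desc pa a u -> desc pa b u -> desc pa a b || desc pa b a.
Proof.
move=> /descP[i <-] /descP[j <-]; apply/orP.
have [ij | /ltnW ji] := leqP i j; [right | left]; apply/descP.
  by exists (j - i)%N; rewrite -iterD subnK.
by exists (i - j)%N; rewrite -iterD subnK.
Qed.

Lemma iter_pa_root k : iter k pa r = r.
Proof. by case: tree => pr _; elim: k => //= k ->. Qed.

Lemma iter_cycle_root u n : iter n.+1 pa u = u -> u = r.
Proof.
move=> cyc; case: tree => _ /(_ u)[k uk].
have iter_cyc m : iter (n.+1 * m) pa u = u.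
  by elim: m => [|m IH]; rewrite ?muln0 // mulnS iterD IH.
by rewrite -(iter_cyc k) -(subnK (leq_pmull k (ltn0Sn n))) iterD uk iter_pa_root.
Qed.

Lemma desc_anti v w : desc pa v w -> desc pa w v -> v = w.
Proof.
move=> /descP[m wv] /descP[n vw].
have cyc : iter (m + n) pa v = v by rewrite iterD vw.
case: m wv cyc => [|m] wv cyc; first by rewrite -wv.
by rewrite -vw (iter_cycle_root cyc) iter_pa_root.
Qed.

Lemma ch_pa v k : k \in ch r pa v -> pa k = v.
Proof. by rewrite inE => /andP[_ /eqP]. Qed.

Lemma ch_neq v k : k \in ch r pa v -> k != v.
Proof.
rewrite inE => /andP[kr /eqP kv]; apply: contra kr => /eqP kv'.
by apply/eqP/(@iter_cycle_root k 0); rewrite /= kv kv'.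
Qed.

Lemma desc_ch v k u : k \in ch r pa v -> desc pa k u -> desc pa v u.
Proof. by move=> /ch_pa <-; apply: desc_trans (desc_pa k). Qed.

Lemma ch_ndesc v k : k \in ch r pa v -> ~~ desc pa k v.
Proof.
move=> kv; apply: contra (ch_neq kv) => kdv.
by rewrite (desc_anti kdv (desc_ch kv (desc_refl k))).
Qed.

Lemma exists_ch_desc v u : desc pa v u -> u != v ->
  exists2 k, k \in ch r pa v & desc pa k u.
Proof.
move=> /descP uv nuv.
have : exists n, iter n pa u == v by case: uv => n <-; exists n.
case/ex_minnP => -[|n]; first by move=> /eqP /= uv0; rewrite uv0 eqxx in nuv.
move=> /eqP /= un minn.
have nv : iter n pa u != v by apply/negP => /minn; rewrite ltnn.
exists (iter n pa u); last by apply/descP; exists n.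
rewrite inE un eqxx andbT; apply: contra nv => /eqP nr.
by rewrite -un nr; case: tree => ->.
Qed.

Lemma ch_desc_uniq v k1 k2 u : k1 \in ch r pa v -> k2 \in ch r pa v ->
  desc pa k1 u -> desc pa k2 u -> k1 = k2.
Proof.
move=> c1 c2 d1 d2.
wlog d12 : k1 k2 c1 c2 d1 d2 / desc pa k1 k2.
  by move=> H; case/orP: (desc_total d1 d2) => ?; [|apply/esym]; apply: H.
apply/eqP; apply: contraT => k12.
by move: (ch_ndesc c1); rewrite -(ch_pa c2) desc_pa_neq // eq_sym.
Qed.

Lemma tree_ind (P : V -> Prop) :
  (forall v, (forall k, k \in ch r pa v -> P k) -> P v) -> forall v, P v.
Proof.
move=> IH v; have [n] := ubnP #|[set u | desc pa v u]|.
elim: n v => // n IHn v ltn; apply: IH => k kv; apply: IHn.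
rewrite -ltnS; apply: leq_trans ltn; apply: proper_card; apply/properP; split.
  by apply/fintype.subsetP => u; rewrite !inE; apply: desc_ch.
by exists v; rewrite inE ?desc_refl ?(ch_ndesc kv).
Qed.

Lemma sum_desc_ch (M : nmodType) (Q : pred V) (f : V -> M) v :
  \sum_(u | [&& Q u, desc pa v u & u != v]) f u =
  \sum_(k in ch r pa v) \sum_(u | Q u && desc pa k u) f u.
Proof.
symmetry; rewrite (exchange_big_dep (fun u => [&& Q u, desc pa v u & u != v])) /=.
  apply: eq_bigr => u /and3P[Qu vu nuv].
  have [k kv ku] := exists_ch_desc vu nuv.
  rewrite (big_pred1 k) // => k' /=; rewrite Qu /=.
  by apply/andP/eqP => [[k'v k'u] | ->]; [exact: ch_desc_uniq k'v kv k'u ku |].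
move=> k u kv /andP[Qu ku]; rewrite Qu (desc_ch kv ku) /=.
by apply: contraNneq (ch_ndesc kv) => <-.
Qed.

Lemma leaf_desc v u : leaf r pa v -> desc pa v u -> u = v.
Proof.
move=> lv vu; apply/eqP; apply: contraT => nuv.
have [k kv _] := exists_ch_desc vu nuv.
by move: lv; rewrite /leaf cards_eq0 => /eqP chv; rewrite chv inE in kv.
Qed.

Lemma leaves_leaf v : leaf r pa v -> leaves r pa v = [set v].
Proof.
move=> lv; apply/setP => u; rewrite !inE.
by apply/andP/eqP => [[_ /(leaf_desc lv)] | ->] //; rewrite lv desc_refl.
Qed.

Lemma leaves_ch_sub v k : k \in ch r pa v -> leaves r pa k \subset leaves r pa v.
Proof.
by move=> kv; apply/fintype.subsetP => j; rewrite !inE => /andP[-> /(desc_ch kv)].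
Qed.

Lemma leaves_ch v j : internal r pa v -> j \in leaves r pa v ->
  exists2 k, k \in ch r pa v & j \in leaves r pa k.
Proof.
move=> iv; rewrite inE => /andP[lj vj].
have jv : j != v by apply: contraNneq iv => <-.
have [k kv kj] := exists_ch_desc vj jv.
by exists k; rewrite // inE lj.
Qed.

Lemma sum_leaves_ch (M : nmodType) (f : V -> M) v : internal r pa v ->
  \sum_(j in leaves r pa v) f j = \sum_(k in ch r pa v) \sum_(j in leaves r pa k) f j.
Proof.
move=> iv; transitivity (\sum_(k in ch r pa v) \sum_(j | leaf r pa j && desc pa k j) f j).
  rewrite -sum_desc_ch; apply: eq_bigl => j; rewrite inE.
  by case: eqVneq => [-> | _]; rewrite ?andbT // (negPf iv).
by apply: eq_bigr => k _; apply: eq_bigl => j; rewrite inE.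
Qed.

Lemma sum_Iv_ch (M : nmodType) (f : V -> M) v :
  \sum_(w in Iv r pa v :\ v) f w = \sum_(k in ch r pa v) \sum_(w in Iv r pa k) f w.
Proof.
transitivity (\sum_(k in ch r pa v) \sum_(w | internal r pa w && desc pa k w) f w).
  by rewrite -sum_desc_ch; apply: eq_bigl => w; rewrite !inE andbC andbA.
by apply: eq_bigr => k _; apply: eq_bigl => w; rewrite inE.
Qed.

Lemma Iv_leaf v : leaf r pa v -> Iv r pa v = finset.set0.
Proof.
move=> lv; apply/setP => w; rewrite !inE; apply/negP => /andP[iw /(leaf_desc lv) wv].
by rewrite wv /internal lv in iw.
Qed.

Lemma card_leaves_gt0 v : (0 < #|leaves r pa v|)%N.
Proof.
elim/tree_ind: v => v IH; have [lv | iv] := boolP (leaf r pa v).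
  by rewrite leaves_leaf // cards1.
have /card_gt0P[k kv] : (0 < #|ch r pa v|)%N by rewrite lt0n.
exact: leq_trans (IH k kv) (subset_leq_card (leaves_ch_sub kv)).
Qed.

Lemma anc_self v : anc pa v v = finset.set0.
Proof.
apply/setP => w; rewrite !inE; apply/negP => /and4P[vw wv nwv _].
by rewrite (desc_anti vw wv) eqxx in nwv.
Qed.

Lemma anc_ch v k : k \in ch r pa v -> anc pa v k = finset.set0.
Proof.
move=> kv; apply/setP => w; rewrite !inE; apply/negP => /and4P[vw wk nwv nwk].
have [c cv cw] := exists_ch_desc vw nwv.
have ck := ch_desc_uniq cv kv (desc_trans cw wk) (desc_refl k).
rewrite ck in cw.
by rewrite (desc_anti wk cw) eqxx in nwk.
Qed.

Lemma anc_chD v k j : k \in ch r pa v -> desc pa k j -> j != k ->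
  anc pa v j = k |: anc pa k j.
Proof.
move=> kv kj njk; apply/setP => w; rewrite !inE.
apply/and4P/orP => [[vw wj nwv nwj] | [/eqP -> | /and4P[kw wj nwk nwj]]].
- have [c cv cw] := exists_ch_desc vw nwv.
  have ck := ch_desc_uniq cv kv (desc_trans cw wj) kj.
  rewrite ck in cw.
  have [-> | _] := eqVneq w k; first by left.
  by right; rewrite cw wj nwj.
- by split; rewrite ?(desc_ch kv (desc_refl k)) ?(ch_neq kv) // eq_sym.
- split=> //; first exact: desc_ch kv kw.
  by apply: contraNneq (ch_ndesc kv) => <-.
Qed.

End RootedTree.

Section RealAnalysis.
Variable R : realType.

Lemma ln_prod (I : finType) (P : pred I) (F : I -> R) :
  (forall i, P i -> 0 < F i) -> ln (\prod_(i | P i) F i) = \sum_(i | P i) ln (F i).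
Proof.
move=> F_gt0.
suff [] : 0 < \prod_(i | P i) F i /\ ln (\prod_(i | P i) F i) = \sum_(i | P i) ln (F i).
  by [].
apply: (big_rec2 (fun q s => 0 < q /\ ln q = s)) => [|i q s Pi [q_gt0 <-]].
  by rewrite ln1.
by rewrite mulr_gt0 ?F_gt0 // lnM ?posrE ?F_gt0.
Qed.

Lemma psumr_gt0 (I : finType) (A : {pred I}) (F : I -> R) :
  (0 < #|A|)%N -> (forall i, i \in A -> 0 < F i) -> 0 < \sum_(i in A) F i.
Proof.
move=> /card_gt0P[k kA] F_gt0; rewrite (bigD1 k) //=.
rewrite ltr_pwDl ?F_gt0 // sumr_ge0 // => i /andP[iA _].
by rewrite ltW ?F_gt0.
Qed.

Lemma ln_le_subr1 (y : R) : 0 < y -> ln y <= y - 1.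
Proof.
by move=> y_gt0; have := le_ln1Dx (x := y - 1); rewrite [1 + _]addrC subrK; apply; lra.
Qed.

Lemma ln_eq_subr1 (y : R) : 0 < y -> ln y = y - 1 -> y = 1.
Proof.
move=> y_gt0 e; apply/eqP; rewrite -ln_eq0 //; apply: contraTT isT => ln_neq0.
by have := expR_gt1Dx ln_neq0; rewrite lnK ?posrE // e; lra.
Qed.

Lemma ler_sum_eq (I : finType) (A : {pred I}) (F G : I -> R) :
  (forall i, i \in A -> F i <= G i) -> \sum_(i in A) F i = \sum_(i in A) G i ->
  forall i, i \in A -> F i = G i.
Proof.
move=> FG e i iA; apply/eqP; rewrite eq_sym -subr_eq0; apply/eqP; move: i iA.
apply: psumr_eq0P => [i iA|]; first by rewrite subr_ge0 FG.
by rewrite sumrB e subrr.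
Qed.

Lemma sup_max (E : set R) x : E x -> ubound E x -> sup E = x.
Proof.
move=> Ex ubx; apply/eqP; rewrite eq_le ge_sup //=; last by exists x.
by apply: ub_le_sup => //; exists x.
Qed.

Section WeightedMean.
Variables (I : finType) (A : {pred I}) (p x : I -> R).
Hypotheses (p_gt0 : forall k, k \in A -> 0 < p k) (sum_p : \sum_(k in A) p k = 1)
  (x_gt0 : forall k, k \in A -> 0 < x k).

Let M := \sum_(k in A) p k * x k.

Let M_gt0 : 0 < M.
Proof.
apply: psumr_gt0 => [|k kA]; last by rewrite mulr_gt0 ?p_gt0 ?x_gt0.
rewrite lt0n; apply/eqP => /card0_eq A0.
by move: sum_p; rewrite big_pred0 // => /eqP; rewrite eq_sym oner_eq0.
Qed.

Let gap_sum : \sum_(k in A) p k * (x k / M - 1 - ln (x k / M)) =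
  ln M - \sum_(k in A) p k * ln (x k).
Proof.
transitivity (\sum_(k in A) (p k * x k / M - p k + p k * ln M - p k * ln (x k))).
  by apply: eq_bigr => k kA; rewrite ln_div ?posrE ?x_gt0 //; ring.
rewrite sumrB big_split /= sumrB -!mulr_suml -/M sum_p mulfV ?gt_eqF //; ring.
Qed.

Let gap_ge0 k : k \in A -> 0 <= p k * (x k / M - 1 - ln (x k / M)).
Proof.
move=> kA; rewrite mulr_ge0 ?subr_ge0 ?ln_le_subr1 ?divr_gt0 ?x_gt0 //.
exact/ltW/p_gt0.
Qed.

Lemma wmean_ln_le : \sum_(k in A) p k * ln (x k) <= ln M.
Proof. by rewrite -subr_ge0 -gap_sum sumr_ge0. Qed.

Lemma wmean_ln_eq : \sum_(k in A) p k * ln (x k) = ln M -> forall k, k \in A -> x k = M.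
Proof.
move=> e k kA.
have gap0 : \sum_(k in A) p k * (x k / M - 1 - ln (x k / M)) = 0.
  by rewrite gap_sum e subrr.
have /eqP := psumr_eq0P gap_ge0 gap0 kA.
rewrite mulf_eq0 gt_eqF ?p_gt0 //= subr_eq0 => /eqP/esym/ln_eq_subr1 xM.
by rewrite -[x k](divfK (lt0r_neq0 M_gt0)) xM ?mul1r // divr_gt0 ?x_gt0.
Qed.
End WeightedMean.

Section SoftMin.
Variables (I : finType) (A : {pred I}) (a : R).

Definition softmin (y : I -> R) := - a * ln (\sum_(k in A) expR (- y k / a)).

Variable p : I -> R.
Hypotheses (a_gt0 : 0 < a) (p_gt0 : forall k, k \in A -> 0 < p k)
  (sum_p : \sum_(k in A) p k = 1).

Let x (y : I -> R) k := expR (- y k / a) / p k.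

Let x_gt0 y k : k \in A -> 0 < x y k.
Proof. by move=> kA; rewrite divr_gt0 ?expR_gt0 ?p_gt0. Qed.

Let wmean_x y : \sum_(k in A) p k * x y k = \sum_(k in A) expR (- y k / a).
Proof. by apply: eq_bigr => k kA; rewrite mulrC divfK // lt0r_neq0 ?p_gt0. Qed.

Let wmean_ln_x y :
  a * \sum_(k in A) p k * ln (x y k) = - \sum_(k in A) p k * (y k + a * ln (p k)).
Proof.
rewrite mulr_sumr -sumrN; apply: eq_bigr => k kA.
rewrite ln_div ?posrE ?expR_gt0 ?p_gt0 // expRK; field; exact: lt0r_neq0.
Qed.

Lemma softmin_le y : softmin y <= \sum_(k in A) p k * (y k + a * ln (p k)).
Proof.
have := wmean_ln_le p_gt0 sum_p (x_gt0 y).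
by rewrite /softmin mulNr lerNl -wmean_ln_x ler_pM2l // wmean_x.
Qed.

Lemma softmin_eq y : softmin y = \sum_(k in A) p k * (y k + a * ln (p k)) ->
  forall k, k \in A -> y k + a * ln (p k) = softmin y.
Proof.
move=> e k kA.
have eq_ln : \sum_(k in A) p k * ln (x y k) = ln (\sum_(k in A) p k * x y k).
  apply: (mulfI (lt0r_neq0 a_gt0)); rewrite wmean_ln_x wmean_x -e /softmin; ring.
have := wmean_ln_eq p_gt0 sum_p (x_gt0 y) eq_ln kA.
rewrite wmean_x /x => /(congr1 (@ln R)).
rewrite ln_div ?posrE ?expR_gt0 ?p_gt0 // expRK /softmin => <-.
field; exact: lt0r_neq0.
Qed.

Lemma softmin_const y C : (forall k, k \in A -> y k + a * ln (p k) = C) -> softmin y = C.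
Proof.
move=> yC; rewrite /softmin.
have -> : \sum_(k in A) expR (- y k / a) = expR (- C / a).
  rewrite -[RHS]mulr1 -sum_p mulr_sumr; apply: eq_bigr => k kA.
  rewrite -[p k]lnK ?posrE ?p_gt0 // -expRD; congr expR.
  rewrite -(yC k kA); field; exact: lt0r_neq0.
by rewrite expRK; field; exact: lt0r_neq0.
Qed.

End SoftMin.
End RealAnalysis.

Section NestedArchimedeanTail.
Variables (R : realType) (V : finType) (r : V) (pa : V -> V)
  (alpha : V -> R) (Lam : V -> (V -> R) -> R) (lam : V -> R).
Hypothesis tree : is_rooted_tree r pa.
Hypothesis alpha_gt0 : forall v, internal r pa v -> 0 < alpha v.
Hypothesis Lam_leaf :
  forall v (x : V -> R), (forall i, 0 < x i) -> leaf r pa v -> Lam v x = x v.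
Hypothesis Lam_internal : forall v (x : V -> R), (forall i, 0 < x i) -> internal r pa v ->
  Lam v x = (\sum_(w in ch r pa v) Lam w x `^ (- (alpha v)^-1)) `^ (- alpha v).
Hypothesis lam_leaf : forall v, leaf r pa v -> lam v = 1.
Hypothesis lam_internal : forall v, internal r pa v ->
  lam v = dd R r pa v `^ (- alpha v) *
          \prod_(w in ch r pa v)
             (dd R r pa w `^ alpha v * lam w) `^ (dd R r pa w / dd R r pa v).

Local Notation d := (dd R r pa).

Lemma d_leaf v : leaf r pa v -> d v = 1.
Proof. by move=> lv; rewrite /dd leaves_leaf // cards1. Qed.

Lemma d_internal v : internal r pa v -> d v = \sum_(k in ch r pa v) d k.
Proof.
move=> iv; rewrite /dd -sumr_const (sum_leaves_ch tree) //.
by apply: eq_bigr => k _; rewrite sumr_const.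
Qed.

Lemma d_gt0 v : 0 < d v.
Proof. by rewrite ltr0n card_leaves_gt0. Qed.

Let dpow_gt0 v e : 0 < d v `^ e.
Proof. exact: powR_gt0 (d_gt0 v). Qed.

Lemma wt_gt0 v k : 0 < d k / d v.
Proof. by rewrite divr_gt0 ?d_gt0. Qed.

Lemma sum_wt v : internal r pa v -> \sum_(k in ch r pa v) d k / d v = 1.
Proof. by move=> iv; rewrite -mulr_suml -d_internal // mulfV // lt0r_neq0 ?d_gt0. Qed.

Lemma lam_gt0 v : 0 < lam v.
Proof.
elim/(tree_ind tree): v => v IH; have [lv | iv] := boolP (leaf r pa v).
  by rewrite lam_leaf.
rewrite lam_internal // mulr_gt0 // prodr_gt0 // => k kv.
by rewrite powR_gt0 // mulr_gt0 ?IH.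
Qed.

Lemma Lam_gt0 v b : (forall i, 0 < b i) -> 0 < Lam v b.
Proof.
move=> b_gt0; elim/(tree_ind tree): v => v IH; have [lv | iv] := boolP (leaf r pa v).
  by rewrite Lam_leaf.
by rewrite Lam_internal // powR_gt0 // psumr_gt0 ?lt0n // => k kv; rewrite powR_gt0 ?IH.
Qed.

Lemma ln_lam_rec v : internal r pa v ->
  d v * (ln (lam v) + alpha v * ln (d v)) =
  \sum_(k in ch r pa v) d k * (ln (lam k) + alpha v * ln (d k)).
Proof.
move=> iv.
have pos k : 0 < (d k `^ alpha v * lam k) `^ (d k / d v).
  by rewrite powR_gt0 // mulr_gt0 ?lam_gt0.
rewrite lam_internal // lnM ?posrE ?prodr_gt0 // ln_powR ln_prod //.
under eq_bigr => k _ do rewrite ln_powR lnM ?posrE ?lam_gt0 // ln_powR.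
rewrite mulNr addrAC addNr add0r mulr_sumr; apply: eq_bigr => k _.
by field; rewrite lt0r_neq0 ?d_gt0.
Qed.

Lemma ln_lam_closed v :
  d v * (ln (lam v) + alpha v * ln (d v)) =
  \sum_(w in Iv r pa v :\ v) (alpha (pa w) - alpha w) * d w * ln (d w).
Proof.
elim/(tree_ind tree): v => v IH; have [lv | iv] := boolP (leaf r pa v).
  by rewrite lam_leaf // d_leaf // (Iv_leaf tree lv) finset.set0D big_set0 ln1; ring.
rewrite (sum_Iv_ch tree) ln_lam_rec //; apply: eq_bigr => k kv.
have [lk | ik] := boolP (leaf r pa k).
  by rewrite lam_leaf // d_leaf // (Iv_leaf tree lk) big_set0 ln1; ring.
have kk : k \in Iv r pa k by rewrite inE desc_refl andbT.
by rewrite (big_setD1 k kk) /= -IH // (ch_pa kv); ring.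
Qed.

(* Off le(v) the maximizer is padded with 1, making it a positive vector. *)
Definition bstar v j :=
  if j \in leaves r pa v then
    lam v * d v `^ alpha v * \prod_(w in anc pa v j) d w `^ (alpha w - alpha (pa w))
  else 1.

Lemma bstar_gt0 v j : 0 < bstar v j.
Proof.
rewrite /bstar; case: ifP => // _.
by rewrite mulr_gt0 ?mulr_gt0 ?lam_gt0 ?prodr_gt0.
Qed.

Lemma ln_bstar v j : j \in leaves r pa v -> ln (bstar v j) =
  ln (lam v) + alpha v * ln (d v) +
  \sum_(w in anc pa v j) (alpha w - alpha (pa w)) * ln (d w).
Proof.
move=> jv; rewrite /bstar jv !lnM ?posrE ?mulr_gt0 ?lam_gt0 ?prodr_gt0 //.
by rewrite ln_powR ln_prod //; under eq_bigr => w _ do rewrite ln_powR.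
Qed.

Lemma ln_bstar_leaf v : leaf r pa v -> ln (bstar v v) = 0.
Proof.
move=> lv; rewrite ln_bstar ?leaves_leaf ?set11 // (anc_self tree) big_set0.
by rewrite lam_leaf // d_leaf // ln1; ring.
Qed.

Lemma ln_bstar_ch v k j : internal r pa v -> k \in ch r pa v -> j \in leaves r pa k ->
  ln (bstar v j) = ln (bstar k j) +
    (ln (lam v) + alpha v * ln (d v)) - (ln (lam k) + alpha v * ln (d k)).
Proof.
move=> iv kv jk; have jv := fintype.subsetP (leaves_ch_sub kv) j jk.
rewrite !ln_bstar //; move: jk; rewrite inE => /andP[lj kj].
have [jk | njk] := eqVneq j k.
  subst j; rewrite (anc_ch tree kv) (anc_self tree) !big_set0.
  by rewrite (lam_leaf lj) (d_leaf lj) ln1; ring.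
rewrite (anc_chD tree kv kj njk) big_setU1 /= ?(ch_pa kv); first ring.
by rewrite !inE eqxx !andbF.
Qed.

Lemma sum_ln_bstar v : \sum_(j in leaves r pa v) ln (bstar v j) = 0.
Proof.
elim/(tree_ind tree): v => v IH; have [lv | iv] := boolP (leaf r pa v).
  by rewrite leaves_leaf // big_set1 ln_bstar_leaf.
rewrite (sum_leaves_ch tree) //.
transitivity (\sum_(k in ch r pa v) d k *
  ((ln (lam v) + alpha v * ln (d v)) - (ln (lam k) + alpha v * ln (d k)))).
  apply: eq_bigr => k kv.
  rewrite (eq_bigr (fun j => ln (bstar k j) +
    ((ln (lam v) + alpha v * ln (d v)) - (ln (lam k) + alpha v * ln (d k))))).
    by rewrite big_split /= IH // add0r sumr_const /dd mulr_natl.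
  by move=> j jk; rewrite (ln_bstar_ch iv kv jk); ring.
rewrite (eq_bigr _ (fun k _ => mulrBr _ _ _)) sumrB -mulr_suml -d_internal //.
by rewrite ln_lam_rec // subrr.
Qed.

Definition ln_gmean v (b : V -> R) := (\sum_(j in leaves r pa v) ln (b j)) / d v.

Lemma ln_gmean_leaf v b : leaf r pa v -> ln_gmean v b = ln (b v).
Proof. by move=> lv; rewrite /ln_gmean leaves_leaf // big_set1 d_leaf // divr1. Qed.

Lemma ln_lam_gmean_rec v b : internal r pa v ->
  \sum_(k in ch r pa v) d k / d v * (ln (lam k) + ln_gmean k b + alpha v * ln (d k / d v)) =
  ln (lam v) + ln_gmean v b.
Proof.
move=> iv; apply: (mulfI (lt0r_neq0 (d_gt0 v))); rewrite mulr_sumr.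
transitivity (\sum_(k in ch r pa v) (d k * (ln (lam k) + alpha v * ln (d k)) +
  \sum_(j in leaves r pa k) ln (b j) - alpha v * ln (d v) * d k)).
  apply: eq_bigr => k _; rewrite /ln_gmean ln_div ?posrE ?d_gt0 //.
  by field; rewrite !lt0r_neq0 ?d_gt0.
rewrite sumrB big_split /= -ln_lam_rec // -(sum_leaves_ch tree) // -mulr_sumr.
by rewrite -d_internal // /ln_gmean; field; rewrite lt0r_neq0 ?d_gt0.
Qed.

Lemma ln_Lam_rec v b : (forall i, 0 < b i) -> internal r pa v ->
  ln (Lam v b) = softmin (ch r pa v) (alpha v) (fun k => ln (Lam k b)).
Proof.
move=> b_gt0 iv; rewrite Lam_internal // ln_powR /softmin; congr (_ * ln _).
apply: eq_bigr => k _; rewrite /powR gt_eqF ?Lam_gt0 //; congr expR.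
by rewrite [LHS]mulrC mulrN mulNr.
Qed.

Lemma ln_Lam_le v b : (forall i, 0 < b i) -> ln (Lam v b) <= ln (lam v) + ln_gmean v b.
Proof.
move=> b_gt0; elim/(tree_ind tree): v => v IH; have [lv | iv] := boolP (leaf r pa v).
  by rewrite Lam_leaf // lam_leaf // ln1 add0r ln_gmean_leaf.
rewrite ln_Lam_rec // -ln_lam_gmean_rec //.
apply: le_trans (softmin_le (alpha_gt0 iv) (fun k _ => wt_gt0 v k) (sum_wt iv) _) _.
by apply: ler_sum => k kv /=; rewrite ler_pM2l ?wt_gt0 // lerD2r IH.
Qed.

Lemma ln_Lam_eq v b : (forall i, 0 < b i) ->
  ln (Lam v b) = ln (lam v) + ln_gmean v b ->
  forall j, j \in leaves r pa v -> ln (b j) = ln_gmean v b + ln (bstar v j).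
Proof.
move=> b_gt0; elim/(tree_ind tree): v => v IH; have [lv | iv] := boolP (leaf r pa v).
  move=> _ j; rewrite leaves_leaf // inE => /eqP ->.
  by rewrite ln_bstar_leaf // addr0 ln_gmean_leaf.
set y := fun k => ln (Lam k b).
set m := fun k => ln (lam k) + ln_gmean k b.
rewrite ln_Lam_rec // -/y => e j jv.
have le_ym k : k \in ch r pa v ->
    d k / d v * (y k + alpha v * ln (d k / d v)) <=
    d k / d v * (m k + alpha v * ln (d k / d v)).
  by move=> kv; rewrite ler_pM2l ?wt_gt0 // lerD2r ln_Lam_le.
have le_sy := softmin_le (alpha_gt0 iv) (fun k _ => wt_gt0 v k) (sum_wt iv) y.
have tight : \sum_(k in ch r pa v) d k / d v * (y k + alpha v * ln (d k / d v)) =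
             \sum_(k in ch r pa v) d k / d v * (m k + alpha v * ln (d k / d v)).
  by apply/eqP; rewrite eq_le ler_sum // ln_lam_gmean_rec // -e le_sy.
have y_eq_m k : k \in ch r pa v -> y k = m k.
  move=> kv; apply: (addIr (alpha v * ln (d k / d v))).
  by move: (ler_sum_eq le_ym tight kv) => /(mulfI (lt0r_neq0 (wt_gt0 v k))).
have [k kv jk] := leaves_ch tree iv jv.
have sm : softmin (ch r pa v) (alpha v) y =
          \sum_(k in ch r pa v) d k / d v * (y k + alpha v * ln (d k / d v)).
  by rewrite tight /m ln_lam_gmean_rec.
have := softmin_eq (alpha_gt0 iv) (fun k _ => wt_gt0 v k) (sum_wt iv) sm kv.
rewrite e /= ln_div ?posrE ?d_gt0 // => y_k.
rewrite (IH k kv (y_eq_m k kv) j jk) (ln_bstar_ch iv kv jk).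
by move: y_k (y_eq_m k kv); rewrite /y /m; lra.
Qed.

Lemma ln_Lam_shift v b c : (forall i, 0 < b i) ->
  (forall j, j \in leaves r pa v -> ln (b j) = c + ln (bstar v j)) ->
  ln (Lam v b) = c + ln (lam v).
Proof.
move=> b_gt0; elim/(tree_ind tree): v c => v IH c; have [lv | iv] := boolP (leaf r pa v).
  move=> /(_ v); rewrite leaves_leaf // set11 ln_bstar_leaf // => /(_ isT).
  by rewrite Lam_leaf // lam_leaf // ln1 !addr0.
move=> bj; rewrite ln_Lam_rec //.
apply: (softmin_const (alpha_gt0 iv) (fun k _ => wt_gt0 v k) (sum_wt iv)) => k kv.
rewrite (IH k kv (c + (ln (lam v) + alpha v * ln (d v))
                   - (ln (lam k) + alpha v * ln (d k)))).
  by rewrite ln_div ?posrE ?d_gt0 //; ring.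
move=> j jk; rewrite bj ?(fintype.subsetP (leaves_ch_sub kv)) //.
by rewrite (ln_bstar_ch iv kv jk); ring.
Qed.

Lemma ln_gmean_Sv v b : b \in Sv R r pa v -> ln_gmean v b = 0.
Proof.
by rewrite in_setE => -[b_gt0 prod_b]; rewrite /ln_gmean -ln_prod // prod_b ln1 mul0r.
Qed.

Lemma bstar_Sv v : bstar v \in Sv R r pa v.
Proof.
rewrite in_setE; split=> [i|]; first exact: bstar_gt0.
have prod_gt0 : 0 < \prod_(i in leaves r pa v) bstar v i.
  by apply: prodr_gt0 => i _; exact: bstar_gt0.
apply: ln_inj; rewrite ?posrE ?ltr01 //.
by rewrite (ln_prod (fun i _ => bstar_gt0 v i)) sum_ln_bstar ln1.
Qed.

Lemma Lam_bstar v : Lam v (bstar v) = lam v.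
Proof.
have bstar_pos : forall i, 0 < bstar v i by exact: bstar_gt0.
apply: ln_inj; rewrite ?posrE ?(Lam_gt0 _ bstar_pos) ?lam_gt0 //.
by rewrite (@ln_Lam_shift _ _ 0) ?add0r // => j _; rewrite add0r.
Qed.

Lemma Lam_le_lam v b : b \in Sv R r pa v -> Lam v b <= lam v.
Proof.
move=> bS; have [b_gt0 _] : Sv R r pa v b by rewrite -in_setE.
rewrite -ler_ln ?posrE ?Lam_gt0 ?lam_gt0 //.
by rewrite -[ln (lam v)]addr0 -(ln_gmean_Sv bS) ln_Lam_le.
Qed.

Lemma argmax_Lam_uniq v b : b \in Sv R r pa v -> lam v <= Lam v b ->
  forall j, j \in leaves r pa v -> b j = bstar v j.
Proof.
move=> bS lamb j jv; have [b_gt0 _] : Sv R r pa v b by rewrite -in_setE.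
have Lb : ln (Lam v b) = ln (lam v) + ln_gmean v b.
  by rewrite ln_gmean_Sv // addr0; congr ln; apply/eqP; rewrite eq_le Lam_le_lam.
apply: ln_inj; rewrite ?posrE ?bstar_gt0 //.
by rewrite (ln_Lam_eq b_gt0 Lb jv) ln_gmean_Sv // add0r.
Qed.

Lemma sup_Lam v : sup [set Lam v b | b in Sv R r pa v] = lam v.
Proof.
apply: sup_max => [|_ [b bS <-]]; last by apply: Lam_le_lam; rewrite in_setE.
by exists (bstar v); [move: (bstar_Sv v); rewrite in_setE | exact: Lam_bstar].
Qed.

Lemma lam_closed v :
  lam v = d v `^ (- alpha v) *
          \prod_(w in Iv r pa v :\ v) d w `^ ((alpha (pa w) - alpha w) * d w / d v).
Proof.
have prod_gt0 :
    0 < \prod_(w in Iv r pa v :\ v) d w `^ ((alpha (pa w) - alpha w) * d w / d v).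
  by apply: prodr_gt0.
apply: ln_inj; rewrite ?posrE ?lam_gt0 ?mulr_gt0 //.
rewrite lnM ?posrE // ln_powR ln_prod //.
under eq_bigr => w _ do rewrite ln_powR mulrAC.
rewrite -mulr_suml -ln_lam_closed; field; exact: lt0r_neq0 (d_gt0 v).
Qed.

End NestedArchimedeanTail.

Local Open Scope classical_set_scope.

Theorem theorem4p6 (R : realType) (V : finType) (r : V) (pa : V -> V)
    (alpha : V -> R) (Lam : V -> (V -> R) -> R) (lam : V -> R) :
  is_rooted_tree r pa ->
  (forall v, internal r pa v -> 0 < alpha v) ->
  (* tail copulas Lambda_v, given recursively *)
  (forall v (x : V -> R), (forall i, 0 < x i) -> leaf r pa v -> Lam v x = x v) ->
  (forall v (x : V -> R), (forall i, 0 < x i) -> internal r pa v ->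
     Lam v x = (\sum_(w in ch r pa v) Lam w x `^ (- (alpha v)^-1)) `^ (- alpha v)) ->
  (* lambda*_v, given recursively *)
  (forall v, leaf r pa v -> lam v = 1) ->
  (forall v, internal r pa v ->
     lam v = dd R r pa v `^ (- alpha v) *
             \prod_(w in ch r pa v)
                (dd R r pa w `^ alpha v * lam w) `^ (dd R r pa w / dd R r pa v)) ->
  forall v, internal r pa v ->
  [/\ (* (i) the MTCM of C_v equals lambda*_v *)
      sup [set Lam v b | b in Sv R r pa v] = lam v,
      (* (ii) closed form *)
      lam v = dd R r pa v `^ (- alpha v) *
              \prod_(w in Iv r pa v :\ v)
                 dd R r pa w `^ ((alpha (pa w) - alpha w) * dd R r pa w / dd R r pa v)
    & (* (iii) the maximizer exists, is unique (on le(v)), and is given by *)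
      exists2 bs : V -> R, bs \in Sv R r pa v &
        [/\ forall b, b \in Sv R r pa v -> Lam v b <= Lam v bs,
            forall b', b' \in Sv R r pa v ->
              (forall b, b \in Sv R r pa v -> Lam v b <= Lam v b') ->
              forall j, j \in leaves r pa v -> b' j = bs j
          & forall j, j \in leaves r pa v ->
              bs j = lam v * dd R r pa v `^ alpha v *
                     \prod_(w in anc pa v j)
                        dd R r pa w `^ (alpha w - alpha (pa w))]].
Proof.
move=> tree alpha_gt0 Lam_leaf Lam_internal lam_leaf lam_internal v _.
have Lam_bs : Lam v (bstar r pa alpha lam v) = lam v by exact: Lam_bstar.
have Lam_le b : b \in Sv R r pa v -> Lam v b <= lam v.
  exact: (Lam_le_lam (alpha := alpha)).
split; [exact: (sup_Lam (alpha := alpha)) | exact: lam_closed |].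
have bS : bstar r pa alpha lam v \in Sv R r pa v by exact: bstar_Sv.
exists (bstar r pa alpha lam v) => //.
split=> [b /Lam_le | b' b'S b'max | j jv]; first by rewrite Lam_bs.
  by apply: (argmax_Lam_uniq (Lam := Lam)); rewrite // -Lam_bs b'max.
by rewrite /bstar jv.
Qed.
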